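(* Consider the ring network, traffic model and shortest-path routing described in the context, and fix a wavelength $\lambda\in\{1,\ldots,\Lambda\}$. For every node $n\in\{0,\ldots,N-1\}$, \[ \mathbb{P}\big(\overset{\curvearrowright}{(n+1)}_{\lambda}\big)=\mathbb{P}\big(\overset{\curvearrowright}{n}_{\lambda}\big)+\mathbb{P}(S=n)-\mathbb{P}(\mathcal{G}_{\lambda}=n), \] where indices of segments are taken modulo $N$ (so $\overset{\curvearrowright}{0}_\lambda=\overset{\curvearrowright}{N}_\lambda$).
   Context: Network: a bidirectional ring with $N$ nodes labeled $1,\ldots,N$ in clockwise order; node labels are taken modulo $N$, so node $N$ is also called node $0$. There are $\Lambda$ wavelength channels $1,\ldots,\Lambda$ in each ring direction, and $\eta:=N/\Lambda$ is a positive integer. Node $n$ receives (is homed) on wavelength $\lambda$ iff $n\in\mathcal{M}_\lambda:=\{\lambda+k\Lambda: k=0,\ldots,\eta-1\}$. For $1\le n\le N$, $u_n$ denotes the clockwise ring segment from node $n-1$ to node $n$. Node $N$ is the hotspot. Traffic: each packet has a sender $S$ and a destination (fanout) set $\mathcal{F}\subset\{1,\ldots,N\}\setminus\{S\}$, generated as follows, with $\alpha,\beta,\gamma\ge 0$, $\alpha+\beta+\gamma=1$. With probability $\alpha$ (uniform traffic): $S$ is uniform on $\{1,\ldots,N\}$, a fanout $l\in\{1,\ldots,N-1\}$ is drawn from a distribution $(\mu_l)$, and $\mathcal{F}$ is uniform among $l$-subsets of $\{1,\ldots,N\}\setminus\{S\}$. With probability $\beta$ (hotspot destination traffic): $S$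 is uniform on $\{1,\ldots,N-1\}$, $l$ is drawn from $(\nu_l)$, and $\mathcal{F}=\mathcal{F}'\cup\{N\}$ with $\mathcal{F}'$ uniform among $(l-1)$-subsets of $\{1,\ldots,N-1\}\setminus\{S\}$. With probability $\gamma$ (hotspot source traffic): $S=N$, $l$ is drawn from $(\kappa_l)$, and $\mathcal{F}$ is uniform among $l$-subsets of $\{1,\ldots,N-1\}$. $\mathbb{P}$ denotes the probability measure of this model. Shortest-path routing on wavelength $\lambda$: let $\mathcal{F}_\lambda:=\mathcal{F}\cap\mathcal{M}_\lambda$ and $\mathcal{A}_\lambda:=\mathcal{F}_\lambda\cup\{S\}$, with $|\mathcal{F}_\lambda|=\ell$. The ''gaps'' are the $\ell+1$ clockwise arcs between cyclically consecutive nodes of $\mathcal{A}_\lambda$ (if $\mathcal{A}_\lambda=\{X_1<\dots<X_{\ell+1}\}$, their lengths are $X_1+N-X_{\ell+1}$ and $X_{i}-X_{i-1}$, $i=2,\ldots,\ell+1$). A largest gap is chosen, uniformly at random among ties; it is called the chosen largest gap $CLG_\lambda$, and $\mathcal{G}_\lambda\in\{0,\ldots,N-1\}$ denotes the node at which $CLG_\lambda$ starts (in the clockwise sense). The packet is sent on wavelength $\lambda$ from $S$ clockwise up to node $\mathcal{G}_\lambda$ and from $S$ counterclockwise up to the node ending $CLG_\lambda$, so that exactly the segments outside $CLG_\lambda$ are traversed (if $\mathcal{F}_\lambda=\emptyset$ nothing is sent on $\lambda$). The event $\overset{\curvearrowright}{n}_{\lambda}$ means that segment $u_n$ is traversed in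 the clockwise direction on wavelength $\lambda$, i.e., $u_n$ lies on the clockwise arc from $S$ to $\mathcal{G}_\lambda$. *)

From HB Require Import structures.
From mathcomp Require Import all_boot all_order all_algebra.
Set Implicit Arguments. Unset Strict Implicit. Unset Printing Implicit Defensive.
Import Order.TTheory GRing.Theory Num.Theory.

(* Nodes 1..N are represented by 'I_N, node N being represented by 0
   (labels are taken modulo N).  Hence the hotspot N is the ordinal 0. *)

Section Ring.
Variables (N Lam eta : nat).

Definition homed (lam : nat) : {set 'I_N} :=
  [set i : 'I_N | [exists k : 'I_eta, (lam + k * Lam) %% N == val i]].

Definition inA (A : {set 'I_N}) (m : nat) : bool :=
  [exists y in A, val y == m %% N].

(* length of the clockwise gap starting at x in A: the least d in 1..N such
   that node x + d belongs to A *)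
Definition gaplen (A : {set 'I_N}) (x : 'I_N) : nat :=
  (find (fun d => inA A (x + d)) (iota 1 N)).+1.

Definition Aset (lam : nat) (S : 'I_N) (F : {set 'I_N}) : {set 'I_N} :=
  (F :&: homed lam) :|: [set S].

Definition maxgap (A : {set 'I_N}) : nat := \max_(x in A) gaplen A x.

(* starting nodes of the largest gaps (the candidates for G_lam) *)
Definition ties (A : {set 'I_N}) : {set 'I_N} :=
  [set x in A | gaplen A x == maxgap A].

(* segment u_n (from node n-1 to node n; index taken mod N) lies on the
   clockwise arc from S to G *)
Definition cw_seg (S G : 'I_N) (n : nat) : bool :=
  (0 < (n + N - S) %% N) && ((n + N - S) %% N <= (G + N - S) %% N).

Definition isHot (i : 'I_N) : bool := val i == 0.
Definition hotIn (F : {set 'I_N}) : bool := [exists i in F, isHot i].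

(* outcomes: (sender S, fanout set F, node G_lam where CLG_lam starts) *)
Definition outcome := ('I_N * {set 'I_N} * 'I_N)%type.

Local Open Scope ring_scope.

Variables (R : realFieldType) (alpha beta gamma : R) (mu nu kappa : nat -> R).

Definition pSF (S : 'I_N) (F : {set 'I_N}) : R :=
  alpha * (if (S \notin F) && (0 < #|F|)%N then
             (N%:R)^-1 * mu #|F| / ('C(N.-1, #|F|))%:R else 0)
  + beta * (if [&& ~~ isHot S, S \notin F & hotIn F] then
             ((N.-1)%:R)^-1 * nu #|F| / ('C(N.-2, #|F|.-1))%:R else 0)
  + gamma * (if [&& isHot S, S \notin F & (0 < #|F|)%N] then
             kappa #|F| / ('C(N.-1, #|F|))%:R else 0).

Variable lam : nat.

(* joint law of (S, F, G_lam): G_lam uniform among the largest-gap starts *)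
Definition weight (o : outcome) : R :=
  let: (Snd, F, G) := o in
  pSF Snd F * (if G \in ties (Aset lam Snd F)
             then (#|ties (Aset lam Snd F)|%:R)^-1 else 0).

Definition Prob (E : pred outcome) : R := \sum_(o : outcome | E o) weight o.

Definition cw_event (n : nat) : pred outcome := fun o => cw_seg o.1.1 o.2 n.
Definition S_event (n : 'I_N) : pred outcome := fun o => o.1.1 == n.
Definition G_event (n : 'I_N) : pred outcome := fun o => o.2 == n.

End Ring.

(* Measure positions on the ring by their clockwise distance from the sender
   [S]: segment [u_n] is traversed clockwise iff [0 < d(n) <= d(G)].  Moving
   from [n] to [n+1] increases [d] by one, so the indicator of the event gains
   one exactly when [n = S] ([d(n) = 0]) and loses one exactly when [n = G]
   ([d(n) = d(G)]).  This identity holds outcome by outcome, hence for any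
   weighting of the outcomes, in particular for the traffic model. *)
From mathcomp Require Import all_boot all_order all_algebra zify.
Import Order.TTheory GRing.Theory Num.Theory.

Section ClockwiseDistance.
Variables (N : nat) (S : 'I_N).

Definition cw_dist (m : nat) : nat := (m + N - S) %% N.

Lemma cw_segE (G : 'I_N) (m : nat) :
  cw_seg S G m = (0 < cw_dist m <= cw_dist G).
Proof. by []. Qed.

Lemma cw_distS (m : nat) : cw_dist m.+1 = (cw_dist m).+1 %% N.
Proof.
have leSmN : S <= m + N by rewrite (leq_trans (ltnW (ltn_ord S))) ?leq_addl.
by rewrite /cw_dist addSn subSn // -[in RHS]addn1 modnDml addn1.
Qed.

Lemma cw_dist_lt (m : nat) : cw_dist m < N.
Proof. by rewrite ltn_mod (leq_ltn_trans _ (ltn_ord S)). Qed.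

Lemma eq_cw_dist (x y : 'I_N) : (cw_dist x == cw_dist y) = (x == y).
Proof.
have leSN : S <= N := ltnW (ltn_ord S).
by rewrite /cw_dist -!addnBA // eqn_modDr !modn_small.
Qed.

Lemma cw_dist_eq0 (x : 'I_N) : (cw_dist x == 0) = (S == x).
Proof.
have dist_self : cw_dist S = 0 by rewrite /cw_dist addKn modnn.
by rewrite -dist_self eq_cw_dist eq_sym.
Qed.

End ClockwiseDistance.

Lemma arc_indicator_step (N d g : nat) : d < N -> g < N ->
  (0 < d.+1 %% N <= g) + (d == g) = (0 < d <= g) + (d == 0).
Proof.
move=> ltdN ltgN; have [dN | dN] := eqVneq d.+1 N.
  by rewrite dN modnn; lia.
by rewrite modn_small; lia.
Qed.

Lemma cw_seg_succ (N : nat) (S G n : 'I_N) :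
  cw_seg S G n.+1 + (G == n) = cw_seg S G n + (S == n).
Proof.
rewrite !cw_segE cw_distS [G == n]eq_sym -(eq_cw_dist _ S) -(cw_dist_eq0 _ S).
by apply: arc_indicator_step; apply: cw_dist_lt.
Qed.

Local Open Scope ring_scope.

Lemma sumr_pred_count (T : finType) (V : nmodType) (w : T -> V)
    (a b c d : pred T) :
  (forall x, a x + b x = c x + d x)%N ->
  \sum_(x | a x) w x + \sum_(x | b x) w x
    = \sum_(x | c x) w x + \sum_(x | d x) w x.
Proof.
move=> abcd.
have sum_count (p : pred T) : \sum_(x | p x) w x = \sum_x w x *+ p x.
  by rewrite big_mkcond; apply: eq_bigr => x _; rewrite mulrb.
by rewrite !sum_count -!big_split; apply: eq_bigr => x _ /=; rewrite -!mulrnDr abcd.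
Qed.

Theorem proposition3p1 (R : realFieldType) (Lam eta lam : nat)
  (alpha beta gamma : R) (mu nu kappa : nat -> R) (n : 'I_(eta * Lam)) :
  (0 < Lam)%N -> (0 < eta)%N -> (1 <= lam <= Lam)%N ->
  0 <= alpha -> 0 <= beta -> 0 <= gamma -> alpha + beta + gamma = 1 ->
  (forall l, 0 <= mu l) -> \sum_(1 <= l < eta * Lam) mu l = 1 ->
  (forall l, 0 <= nu l) -> \sum_(1 <= l < eta * Lam) nu l = 1 ->
  (forall l, 0 <= kappa l) -> \sum_(1 <= l < eta * Lam) kappa l = 1 ->
  let P := Prob Lam eta alpha beta gamma mu nu kappa lam in
  P (cw_event n.+1) = P (cw_event n) + P (S_event n) - P (G_event n).
Proof.
move=> *; apply/eqP; rewrite eq_sym subr_eq; apply/eqP.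
by apply: sumr_pred_count => -[[S F] G]; exact/esym/cw_seg_succ.
Qed.
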